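(* Let $\Omega$ be an open set in $\mathbb{R}^n$ and $\Gamma$ a closed subset of $\partial\Omega$. Let $1\le q\le\infty$, $\mu\in\mathsf{M}^q(\Omega)$, and let $0\le t\le n(q-1)/q$ if $1\le q<\infty$, resp. $0\le t\le n$ if $q=\infty$. Then $\nu:=\delta_\Gamma^{-t}\mu$ satisfies $\nu\in\mathsf{M}_\Gamma^{qn/(n+qt)}(\Omega)$ if $1\le q<\infty$, and $\nu\in\mathsf{M}_\Gamma^{n/t}(\Omega)$ if $q=\infty$.
   Context: $\delta_\Gamma(x)=\mathrm{dist}(x,\Gamma)$. For $1\le q\le\infty$, $q'=q/(q-1)$ ($1'=\infty$, $\infty'=1$), and $n/\infty=0$ (so $n/0=\infty$ when $t=0$). The Morrey space $\mathsf{M}^q(\Omega)$ is the set of regular signed measures $\mu$ on $\Omega$ with $\sup\{r^{-n/q'}|\mu|(\Omega\cap B(x,r)): x\in\Omega,\ 0<r<\infty\}<\infty$. $\mathsf{M}^q_\Gamma(\Omega)$ is the set of $\nu=\nu_+-\nu_-$ with $\nu_\pm$ nonnegative Radon measures on $\Omega$ and $\sup\{r^{-n/q'}|\nu|(\Omega\cap B(x,r)): x\in\Omega,\ 0<r<\delta_\Gamma(x)/2\}<\infty$. The charge $\delta_\Gamma^{-t}\mu$ is $\varphi\mapsto\int_\Omega\varphi\,\delta_\Gamma^{-t}\,d\mu$. *)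

From HB Require Import structures.
From mathcomp Require Import all_boot all_order all_algebra.
From mathcomp Require Import all_classical all_reals all_analysis.
Set Implicit Arguments. Unset Strict Implicit. Unset Printing Implicit Defensive.
Import Order.TTheory GRing.Theory Num.Theory.
Import numFieldNormedType.Exports.
Local Open Scope classical_set_scope.
Local Open Scope ring_scope.

Section MorreyDefs.
Variables (R : realType) (n : nat).

Definition Rn := 'rV[R]_n.

Definition BorelRn := g_sigma_algebraType (@open Rn).

Definition enorm (x : Rn) : R := Num.sqrt (\sum_(i < n) x ord0 i ^+ 2).
Definition eball (x : Rn) (r : R) : set Rn := [set y | enorm (y - x) < r].

(* delta_G(x) = dist(x, G) (= +oo when G is empty). *)
Definition dist_to (G : set Rn) (x : Rn) : \bar R :=
  ereal_inf [set (enorm (x - y))%:E | y in G].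

Definition boundary (O : set Rn) : set Rn := closure O `\` interior O.

(* n / q' for an exponent q in [1, +oo] (q' = q/(q-1), n/oo = 0). *)
Definition morrey_exp (q : \bar R) : R :=
  match q with
  | r%:E => n%:R * (1 - r^-1)
  | _ => n%:R
  end.

(* the weight delta_G^{-t}, with the convention (+oo)^{-t} = 0 if t > 0 and
   = 1 if t = 0 (only relevant when G is empty). *)
Definition weight (G : set Rn) (t : R) (x : Rn) : \bar R :=
  match dist_to G x with
  | d%:E => (d `^ (- t))%:E
  | _ => if t == 0 then 1%E else 0%E
  end.

Definition is_measure (m : set BorelRn -> \bar R) : Prop :=
  [/\ m set0 = 0%E, (forall A, measurable A -> (0 <= m A)%E)
    & semi_sigma_additive m].

Definition radon_on (O : set Rn) (m : set BorelRn -> \bar R) : Prop :=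
  forall K : set Rn, compact K -> K `<=` O -> (m K < +oo)%E.

Definition mutually_singular_on (O : set Rn) (m1 m2 : set BorelRn -> \bar R) :=
  exists P : set BorelRn, measurable P /\
    m1 (O `&` ~` P) = 0%E /\ m2 (O `&` P) = 0%E.

(* A signed (Radon) measure on O is represented by its Jordan decomposition
   (mp, mn): two mutually singular nonnegative Radon measures; its total
   variation is |mu| = mp + mn. *)
Definition signed_radon_on (O : set Rn) (mp mn : set BorelRn -> \bar R) :=
  [/\ is_measure mp, is_measure mn, radon_on O mp, radon_on O mn
    & mutually_singular_on O mp mn].

Definition in_Morrey (O : set Rn) (q : \bar R) (mp mn : set BorelRn -> \bar R) :=
  signed_radon_on O mp mn /\
  exists C : R, forall (x : Rn) (r : R), O x -> 0 < r ->
    ((r `^ (- morrey_exp q))%:E * (mp (O `&` eball x r) + mn (O `&` eball x r))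
      <= C%:E)%E.

Definition in_MorreyG (O G : set Rn) (q : \bar R) (np nn : set BorelRn -> \bar R) :=
  signed_radon_on O np nn /\
  exists C : R, forall (x : Rn) (r : R), O x -> 0 < r ->
    ((r *+ 2)%:E < dist_to G x)%E ->
    ((r `^ (- morrey_exp q))%:E * (np (O `&` eball x r) + nn (O `&` eball x r))
      <= C%:E)%E.

Definition weighted (G : set Rn) (t : R) (m : {measure set BorelRn -> \bar R})
  : set BorelRn -> \bar R :=
  fun A => (\int[m]_(y in A) weight G t y)%E.

End MorreyDefs.

From HB Require Import structures.
From mathcomp Require Import all_boot all_order all_algebra.
From mathcomp Require Import all_classical all_reals all_analysis.
From mathcomp Require Import ring lra measurable_realfun.
Import Order.TTheory GRing.Theory Num.Theory.
Import numFieldNormedType.Exports.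
Local Open Scope classical_set_scope.
Local Open Scope ring_scope.
Set Implicit Arguments. Unset Strict Implicit. Unset Printing Implicit Defensive.

(* If 2r < delta(x), the 1-Lipschitz bound on delta gives delta > r on B(x, r),
   hence delta^-t <= r^-t there and
   |nu|(B(x, r)) <= r^-t |mu|(B(x, r)) <= C r^(n/q' - t) = C r^(n/p').
   The pair (delta^-t mu+, delta^-t mu-) is a Jordan decomposition of nu: it
   inherits mutual singularity from mu, and it is Radon on Omega because the
   continuous function delta is positive on Omega (Gamma lies in the boundary
   of the open set Omega), hence bounded below on its compact subsets. *)

Section EuclideanNorm.
Variables (R : realType) (n : nat).
Implicit Types x y : Rn R n.
Local Notation enorm := (@enorm R n).

Definition sqnorm x : R := \sum_(i < n) x ord0 i ^+ 2.
Definition dot x y : R := \sum_(i < n) x ord0 i * y ord0 i.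

Lemma sqnorm_ge0 x : 0 <= sqnorm x.
Proof. by apply: sumr_ge0 => i _; exact: sqr_ge0. Qed.

Lemma Lagrange_identity x y :
  \sum_(i < n) \sum_(j < n) (x ord0 i * y ord0 j - x ord0 j * y ord0 i) ^+ 2 =
  2 * (sqnorm x * sqnorm y - dot x y ^+ 2).
Proof.
transitivity (\sum_(i < n) \sum_(j < n)
   (x ord0 i ^+ 2 * y ord0 j ^+ 2 + y ord0 i ^+ 2 * x ord0 j ^+ 2
    - 2 * (x ord0 i * y ord0 i) * (x ord0 j * y ord0 j))).
  by apply: eq_bigr => i _; apply: eq_bigr => j _; ring.
under eq_bigr do rewrite sumrB big_split /= -!mulr_sumr.
rewrite sumrB big_split /= -!mulr_suml -mulr_sumr.
by rewrite -/(sqnorm x) -/(sqnorm y) -/(dot x y); ring.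
Qed.

Lemma CauchySchwarz_dot x y : dot x y ^+ 2 <= sqnorm x * sqnorm y.
Proof.
rewrite -subr_ge0 -(pmulr_rge0 _ (ltr0Sn R 1)) -Lagrange_identity.
by do 2!(apply: sumr_ge0 => ? _); exact: sqr_ge0.
Qed.

Lemma enorm_ge0 x : 0 <= enorm x.
Proof. exact: sqrtr_ge0. Qed.

Lemma ler_enormD x y : enorm (x + y) <= enorm x + enorm y.
Proof.
rewrite /enorm -/(sqnorm (x + y)) -/(sqnorm x) -/(sqnorm y).
rewrite -(ler_pXn2r (_ : (0 < 2)%N)) ?nnegrE ?addr_ge0 ?sqrtr_ge0 //.
rewrite sqrrD !sqr_sqrtr ?sqnorm_ge0 //.
have -> : sqnorm (x + y) = sqnorm x + sqnorm y + 2 * dot x y.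
  rewrite /sqnorm /dot mulr_sumr -!big_split /=.
  by apply: eq_bigr => i _; rewrite !mxE; ring.
have : dot x y <= Num.sqrt (sqnorm x) * Num.sqrt (sqnorm y).
  rewrite -sqrtrM ?sqnorm_ge0 // (le_trans (real_ler_norm (num_real _))) //.
  by rewrite -sqrtr_sqr ler_sqrt ?CauchySchwarz_dot // mulr_ge0 ?sqnorm_ge0.
rewrite -mulr_natr; lra.
Qed.

Lemma enormN x : enorm (- x) = enorm x.
Proof. by rewrite /enorm; congr Num.sqrt; apply: eq_bigr => i _; rewrite mxE sqrrN. Qed.

Lemma enorm_distC x y : enorm (x - y) = enorm (y - x).
Proof. by rewrite -enormN opprB. Qed.

Lemma enorm0 : enorm 0 = 0.
Proof. by rewrite /enorm big1 ?sqrtr0 // => i _; rewrite mxE expr0n. Qed.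

Lemma normr_le_enorm x : `|x| <= enorm x.
Proof.
rewrite [leLHS]/Num.Def.normr /= mx_normrE.
apply: bigmax_le => [|[i j] _ /=]; first exact: enorm_ge0.
rewrite (ord1 i) /enorm -sqrtr_sqr ler_sqrt ?sqnorm_ge0 //.
by rewrite (bigD1 j) //= lerDl; apply: sumr_ge0 => k _; exact: sqr_ge0.
Qed.

Lemma enorm_continuous : continuous enorm.
Proof.
move=> x; apply: continuous_comp; last exact: sqrt_continuous.
apply: (@cvg_big R 'I_n +%R 0 xpredT add_continuous (Rn R n) (nbhs x) (index_enum _)
  (fun i y => y ord0 i ^+ 2) (fun i => x ord0 i ^+ 2)) => i _.
by apply: cvgM; exact: coord_continuous.
Qed.

Lemma enormB_continuous x : continuous (fun y => enorm (y - x)).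
Proof.
move=> y; have hB : (fun z : 'rV[R]_n => z - x) @ y --> y - x.
  exact: (@cvgB R 'rV[R]_n 'rV[R]_n (nbhs y) _ id (cst x) y x cvg_id (cvg_cst _)).
exact: continuous_comp hB (@enorm_continuous _).
Qed.

Lemma eball_open x r : open (eball x r).
Proof.
rewrite (_ : eball x r = (fun y => enorm (y - x)) @^-1` [set z | z < r]) //.
by apply: open_comp; [move=> y _; exact: enormB_continuous | exact: open_lt].
Qed.

End EuclideanNorm.

Section DistanceToSet.
Variables (R : realType) (n : nat) (G : set (Rn R n)).
Implicit Types x y : Rn R n.
Local Open Scope ereal_scope.

Lemma dist_to_ge0 x : 0 <= dist_to G x.
Proof. by apply: le_ereal_inf_tmp => _ [y _ <-]; rewrite lee_fin enorm_ge0. Qed.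

Lemma dist_to_le x y : G y -> dist_to G x <= (enorm (x - y))%:E.
Proof. by move=> Gy; apply: ereal_inf_lbound; exists y. Qed.

Lemma dist_to_set0 x : G = set0 -> dist_to G x = +oo.
Proof. by move=> ->; rewrite /dist_to image_set0 ereal_inf0. Qed.

Lemma dist_to_lipschitz x y : dist_to G x <= (enorm (x - y))%:E + dist_to G y.
Proof.
rewrite addeC -leeBlDr //; apply: le_ereal_inf_tmp => _ [z Gz <-].
rewrite leeBlDr // -EFinD (le_trans (dist_to_le x Gz)) // lee_fin.
by rewrite [leRHS]addrC (le_trans _ (ler_enormD (x - y)%R _)) // addrA subrK.
Qed.

Lemma dist_to_ball x y (r : R) : (r *+ 2)%:E < dist_to G x ->
  (enorm (y - x) < r)%R -> r%:E < dist_to G y.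
Proof.
move=> rx yx; have := lt_le_trans rx (dist_to_lipschitz x y).
rewrite enorm_distC; case: (dist_to G y) => [d||] //; last by move=> _; exact: ltry.
by rewrite -EFinD !lte_fin mulr2n; lra.
Qed.

Definition dist_toR x : R := fine (dist_to G x).

Section FiniteDistance.
Hypothesis G0 : G !=set0.

Lemma dist_toE x : dist_to G x = (dist_toR x)%:E.
Proof.
have [y Gy] := G0; rewrite /dist_toR fineK // ge0_fin_numE ?dist_to_ge0 //.
exact: le_lt_trans (dist_to_le x Gy) (ltry _).
Qed.

Lemma dist_toR_lipschitz x y : (`|dist_toR x - dist_toR y| <= enorm (x - y))%R.
Proof.
have := dist_to_lipschitz x y; have := dist_to_lipschitz y x.
rewrite !dist_toE -!EFinD !lee_fin (enorm_distC y) => h1 h2.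
by rewrite ler_norml; apply/andP; split; lra.
Qed.

Lemma dist_toR_continuous : continuous dist_toR.
Proof.
move=> x; have Fx := @nbhs_filter 'rV[R]_n x.
apply/(cvgrPdist_lt _ (FF := Fx)) => e e0.
have := (cvgrPdist_lt _ (FF := Fx) _).1 (@enormB_continuous _ _ x x) e e0.
rewrite subrr enorm0; apply: filterS => y.
rewrite sub0r normrN ger0_norm ?enorm_ge0 // -enorm_distC.
exact: le_lt_trans (dist_toR_lipschitz x y).
Qed.

Lemma dist_toR_gt0 y : closed G -> ~ G y -> (0 < dist_toR y)%R.
Proof.
move=> /closed_openC; rewrite openE => /(_ y) oC /oC /nbhs_ballP[e e0 He].
apply: (lt_le_trans e0); rewrite -lee_fin -dist_toE.
apply: le_ereal_inf_tmp => _ [z Gz <-]; rewrite lee_fin.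
apply: le_trans (normr_le_enorm _); rewrite leNgt; apply/negP => yz.
by apply: (He z) Gz; rewrite -ball_normE.
Qed.

End FiniteDistance.

Lemma dist_to_compact_gt0 (K : set (Rn R n)) : closed G -> compact K ->
  (forall y, K y -> ~ G y) ->
  exists2 e : R, (0 < e)%R & forall y, K y -> e%:E <= dist_to G y.
Proof.
move=> cG cK KG; have [G0|/eqP/set0P G0] := pselect (G = set0).
  by exists 1%R => // y _; rewrite dist_to_set0 // leey.
have [K0|/eqP/set0P K0] := pselect (K = set0); first by exists 1%R; rewrite ?K0.
have [|c Kc cmin] := compact_EVT_min (f := dist_toR) K0 cK.
  exact: continuous_subspaceT (dist_toR_continuous G0).
exists (dist_toR c); first by apply: dist_toR_gt0 => //; apply: KG; rewrite -inE.
by move=> y Ky; rewrite (dist_toE G0) lee_fin cmin ?inE.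
Qed.

End DistanceToSet.

Section SubsetsOfRn.
Variables (R : realType) (n : nat).
Local Notation B := (BorelRn R n).

Lemma open_measurableRn (A : set (Rn R n)) : open A -> measurable (A : set B).
Proof. exact: sub_sigma_algebra. Qed.

Lemma compact_measurableRn (A : set (Rn R n)) : compact A -> measurable (A : set B).
Proof.
move=> cA; have clA : closed A by apply: compact_closed cA; exact: norm_hausdorff.
rewrite -(setCK A); apply: measurableC; apply: open_measurableRn.
exact: closed_openC.
Qed.

Lemma continuous_measurable_funRn (f : Rn R n -> R) :
  continuous f -> measurable_fun [set: B] (f : B -> R).
Proof.
move=> cf; apply: (measurability _ (RGenInftyO.measurableE R)).
move=> _ [_ [x ->] <-]; rewrite setTI; apply: open_measurableRn.
rewrite (_ : f @^-1` _ = f @^-1` [set y | y < x]); last first.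
  by apply/seteqP; split => y /=; rewrite in_itv.
by apply: open_comp; [move=> y _; exact: cf | exact: open_lt].
Qed.

Lemma open_boundary_disjoint (O : set (Rn R n)) y : open O -> O y -> ~ boundary O y.
Proof. by rewrite openE => oO Oy [_]; apply; exact: oO. Qed.

End SubsetsOfRn.

Section Weight.
Variables (R : realType) (n : nat) (G : set (Rn R n)) (t : R).
Hypothesis t0 : 0 <= t.
Local Open Scope ereal_scope.

Lemma weight_ge0 y : 0 <= weight G t y.
Proof.
by rewrite /weight; case: (dist_to G y) => [d| |]; rewrite ?lee_fin ?powR_ge0 //; case: ifP.
Qed.

Lemma measurable_weight : measurable_fun [set: BorelRn R n] (weight G t).
Proof.
have [G0|/eqP/set0P G0] := pselect (G = set0).
  rewrite (_ : weight G t = cst (if t == 0%R then 1 else 0)).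
    exact: measurable_cst.
  by apply/funext => y; rewrite /weight dist_to_set0.
rewrite (_ : weight G t = EFin \o (fun y => dist_toR G y `^ (- t))%R).
  have md := continuous_measurable_funRn (dist_toR_continuous G0).
  exact: measurableT_comp (measurableT_comp (measurable_powR _) md).
by apply/funext => y; rewrite /weight (dist_toE G0).
Qed.

Lemma weight_le (r : R) y : (0 < r)%R -> r%:E <= dist_to G y ->
  weight G t y <= (r `^ (- t))%:E.
Proof.
move=> r0; rewrite /weight; case: (dist_to G y) => [d| |] //.
- rewrite !lee_fin => rd; rewrite !powRN lef_pV2 ?posrE ?powR_gt0 //; last first.
    exact: lt_le_trans rd.
  by apply: ge0_ler_powR; rewrite ?nnegrE ?(ltW r0) ?(le_trans (ltW r0) rd).
- move=> _; case: ifP => [/eqP ->|_]; first by rewrite oppr0 powRr0.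
  by rewrite lee_fin powR_ge0.
Qed.

End Weight.

Section WeightedMeasure.
Variables (R : realType) (n : nat) (G : set (Rn R n)) (t : R).
Hypothesis t0 : 0 <= t.
Local Notation B := (BorelRn R n).
Local Open Scope ereal_scope.

Section OneMeasure.
Variable m : {measure set B -> \bar R}.

Lemma weighted_is_measure : is_measure (weighted G t m).
Proof.
split.
- exact: integral_set0.
- by move=> A mA; apply: integral_ge0 => y _; exact: weight_ge0.
- apply: semi_sigma_additive_nng_induced; first exact: measurable_weight.
  by move=> y; exact: weight_ge0.
Qed.

Lemma weighted_null (A : set B) : measurable A -> m A = 0 -> weighted G t m A = 0.
Proof.
move=> mA mA0; rewrite /weighted (ge0_negligible_integral mA mA) //.
- by rewrite setDv integral_set0.
- by apply: measurable_funTS; exact: measurable_weight.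
- by move=> y _; exact: weight_ge0.
Qed.

Lemma weighted_le (A : set B) (e : R) : measurable A -> (0 < e)%R ->
  (forall y, A y -> e%:E <= dist_to G y) ->
  weighted G t m A <= (e `^ (- t))%:E * m A.
Proof.
move=> mA e0 eA; rewrite /weighted -integral_cst //.
apply: ge0_le_integral => //.
- by move=> y _; exact: weight_ge0.
- by apply: measurable_funTS; exact: measurable_weight.
- by move=> y Ay; apply: weight_le => //; exact: eA.
Qed.

Lemma weighted_radon_on (O : set (Rn R n)) : closed G ->
  (forall y, O y -> ~ G y) -> radon_on O m -> radon_on O (weighted G t m).
Proof.
move=> cG OG rm K cK KO.
have [e e0 eK] := dist_to_compact_gt0 cG cK (fun y Ky => OG y (KO y Ky)).
apply: le_lt_trans (weighted_le (compact_measurableRn cK) e0 eK) _.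
by rewrite lte_mul_pinfty ?lee_fin ?powR_ge0 ?rm.
Qed.

End OneMeasure.

Lemma weighted_signed_radon_on (O : set (Rn R n)) (mp mn : {measure set B -> \bar R}) :
  measurable (O : set B) -> closed G -> (forall y, O y -> ~ G y) ->
  signed_radon_on O mp mn -> signed_radon_on O (weighted G t mp) (weighted G t mn).
Proof.
move=> mO cG OG [_ _ rp rn [P [mP [Pp Pn]]]].
split; try exact: weighted_is_measure; try exact: weighted_radon_on.
by exists P; split => //; split; apply: weighted_null => //;
  [apply: measurableI => //; exact: measurableC | exact: measurableI].
Qed.

Lemma weighted_ball_le (mp mn : {measure set B -> \bar R}) (x : Rn R n) (r s : R)
    (A : set B) :
  measurable A -> (0 < r)%R -> A `<=` eball x r -> (r *+ 2)%:E < dist_to G x ->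
  (r `^ (- s))%:E * (weighted G t mp A + weighted G t mn A) <=
  (r `^ (- (s + t)))%:E * (mp A + mn A).
Proof.
move=> mA r0 Ax rx.
have rA y : A y -> r%:E <= dist_to G y.
  by move=> /Ax yx; apply/ltW/(dist_to_ball rx yx).
rewrite opprD powRD ?(gt_eqF r0) ?implybT // EFinM -muleA.
rewrite lee_pmul2l ?lte_fin ?powR_gt0 // ge0_muleDr ?measure_ge0 //.
by apply: leeD; exact: weighted_le.
Qed.

End WeightedMeasure.

Definition weighted_exponent (R : realType) (n : nat) (q : \bar R) (t : R) : \bar R :=
  match q with
  | r%:E => (r * n%:R / (n%:R + r * t))%:E
  | _ => if t == 0 then +oo%E else (n%:R / t)%:E
  end.

Lemma morrey_exp_weighted (R : realType) (n : nat) (q : \bar R) (t : R) :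
  (0 < n)%N -> (1 <= q)%E -> 0 <= t ->
  morrey_exp n (weighted_exponent n q t) + t = morrey_exp n q.
Proof.
move=> n0 q1 t0; have nR0 : (n%:R : R) != 0 by rewrite pnatr_eq0 -lt0n.
case: q q1 => [r| |] //=.
- rewrite lee_fin => r1; have r0 : r != 0 by rewrite gt_eqF // (lt_le_trans ltr01 r1).
  have nrt : n%:R + r * t != 0.
    by rewrite gt_eqF // ltr_pwDl ?ltr0n // mulr_ge0 // (le_trans ler01 r1).
  by rewrite invf_div; field; rewrite r0 nR0.
- move=> _; case: ifPn => [/eqP ->|t0'] /=; first by rewrite addr0.
  by rewrite invf_div; field.
Qed.

Theorem proposition6p1 (R : realType) (n : nat) (Omega Gamma : set (Rn R n))
  (q : \bar R) (t : R) (mup mun : {measure set (BorelRn R n) -> \bar R}) :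
  (0 < n)%N ->
  open Omega -> closed Gamma -> Gamma `<=` boundary Omega ->
  (1 <= q)%E ->
  in_Morrey Omega q mup mun ->
  0 <= t ->
  (forall r : R, q = r%:E -> t <= n%:R * (r - 1) / r) ->
  (q = +oo%E -> t <= n%:R) ->
  let p : \bar R :=
    match q with
    | r%:E => (r * n%:R / (n%:R + r * t))%:E
    | _ => if t == 0 then +oo%E else (n%:R / t)%:E
    end in
  in_MorreyG Omega Gamma p (weighted Gamma t mup) (weighted Gamma t mun).
Proof.
(* The upper bounds on t only ensure p >= 1; the estimate holds for all t >= 0. *)
move=> n0 oO cG GbO q1 [sM [C HC]] t0 _ _ p.
have OG y : Omega y -> ~ Gamma y by move=> Oy /GbO; exact: open_boundary_disjoint oO Oy.
have mO := open_measurableRn oO.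
split; first exact: weighted_signed_radon_on.
exists C => x r Ox r0 rx; apply: le_trans (HC x r Ox r0).
rewrite -(morrey_exp_weighted n0 q1 t0).
apply: weighted_ball_le => //.
by apply: measurableI => //; apply: open_measurableRn; exact: eball_open.
Qed.
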